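(* Let $\Lambda$ be a lattice and let $\bar a=(a_1,\ldots,a_t)\in(\mathcal F^0(\Lambda,\bar K))^t$. For any two sublattices $\Lambda_1,\Lambda_2\subseteq\Lambda$ of finite index, $$\mathrm{CharPoly}_{\bar a,\Lambda_1+\Lambda_2}\ \Big|\ \gcd\big(\mathrm{CharPoly}_{\bar a,\Lambda_1},\,\mathrm{CharPoly}_{\bar a,\Lambda_2}\big)$$ and $$\mathrm{lcm}\big(\mathrm{CharPoly}_{\bar a,\Lambda_1},\,\mathrm{CharPoly}_{\bar a,\Lambda_2}\big)\ \Big|\ \mathrm{CharPoly}_{\bar a,\Lambda_1\cap\Lambda_2}.$$ Consequently, $\mathrm{CharPoly}_{\bar a,\Lambda_2}$ divides $\mathrm{CharPoly}_{\bar a,\Lambda_1}$ whenever $\Lambda_1\subseteq\Lambda_2$.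
   Context: Let $p$ be a prime, $K=\mathrm{GF}(p^r)$, and $\bar K$ an algebraic closure of $K$. A lattice is a free abelian group of finite rank. For an abelian group $G$ and a field $F$, $\mathcal F(G,F)$ denotes the space of all functions $G\to F$ and $\mathcal F^0(G,F)$ the subspace of finitely supported functions. For $f\in\mathcal F(G,F)$ and $a\in\mathcal F^0(G,F)$ the convolution is $(f*a)(g)=\sum_{h\in G}f(h)a(g-h)$, and $\Delta_a$ is the operator $f\mapsto f*a$. For a sublattice $\Lambda'\subseteq\Lambda$ of finite index, $\mathcal F_{\Lambda'}(\Lambda,\bar K)=\{f:\Lambda\to\bar K\,:\,f(v+w)=f(v)\ \forall v\in\Lambda,w\in\Lambda'\}$; it is finite dimensional and preserved by every $\Delta_a$. For $\bar a=(a_1,\ldots,a_t)$, $\mathrm{CharPoly}_{\bar a,\Lambda'}\in\bar K[x]$ is the monic greatest common divisor of the (monic) characteristic polynomials of the restrictions $\Delta_{a_j}|_{\mathcal F_{\Lambda'}(\Lambda,\bar K)}$, $j=1,\ldots,t$. *)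

From HB Require Import structures.
From mathcomp Require Import all_boot all_order all_algebra all_field.
From mathcomp Require Import finmap.
From Stdlib Require Import ClassicalEpsilon.

Set Implicit Arguments.
Unset Strict Implicit.
Unset Printing Implicit Defensive.
Import GRing.Theory.
Local Open Scope ring_scope.

(* The lattice Lambda of rank n, realised as Z^n (row vectors of integers). *)
Definition lat (n : nat) := 'rV[int]_n.

Definition sublattice n (S : lat n -> Prop) : Prop :=
  S 0 /\ (forall x y, S x -> S y -> S (x - y)).

Definition finite_index n (S : lat n -> Prop) : Prop :=
  exists s : seq (lat n), forall v, exists2 w, w \in s & S (v - w).

Definition lat_add n (S1 S2 : lat n -> Prop) : lat n -> Prop :=
  fun v => exists x y, [/\ S1 x, S2 y & v = x + y].

Definition lat_cap n (S1 S2 : lat n -> Prop) : lat n -> Prop :=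
  fun v => S1 v /\ S2 v.

Section CharPoly.
Variables (F : fieldType) (n : nat).

(* f * a, for a finitely supported: (f*a)(g) = sum_h f(h) a(g-h)
   = sum_{k in supp a} f(g-k) a(k). *)
Definition conv (f : lat n -> F) (a : {fsfun lat n -> F with 0}) : lat n -> F :=
  fun g => \sum_(k <- finsupp a) f (g - k) * a k.

Definition periodic (S : lat n -> Prop) (f : lat n -> F) : Prop :=
  forall v w, S w -> f (v + w) = f v.

Definition is_charpoly_on (V : (lat n -> F) -> Prop)
    (T : (lat n -> F) -> (lat n -> F)) (q : {poly F}) : Prop :=
  exists m (b : 'I_m -> lat n -> F) (M : 'M[F]_m),
    [/\ forall i, V (b i),
        forall f, V f -> exists c : 'I_m -> F, f = (fun x => \sum_i c i * b i x),
        forall c : 'I_m -> F, (fun x => \sum_i c i * b i x) = (fun _ => 0) ->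
                                forall i, c i = 0,
        forall i, T (b i) = (fun x => \sum_j M i j * b j x)
      & q = char_poly M].

Definition charpoly_on (V : (lat n -> F) -> Prop)
    (T : (lat n -> F) -> (lat n -> F)) : {poly F} :=
  epsilon (inhabits 0) (is_charpoly_on V T).

Definition monicize (p : {poly F}) : {poly F} := (lead_coef p)^-1 *: p.

(* CharPoly_{a,S}: monic gcd of the char. polys of Delta_{a_j} restricted
   to F_S(Lambda, F). *)
Definition CharPoly (t : nat) (a : 'I_t -> {fsfun lat n -> F with 0})
    (S : lat n -> Prop) : {poly F} :=
  monicize (\big[@gcdp F/0]_(j < t) charpoly_on (periodic S) (conv^~ (a j))).

End CharPoly.

Definition lcmp (F : fieldType) (p q : {poly F}) : {poly F} :=
  monicize ((p * q) %/ gcdp p q).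

From HB Require Import structures.
From mathcomp Require Import all_boot all_order all_algebra all_field.
From mathcomp Require Import finmap boolp.
From Stdlib Require Import ClassicalEpsilon.

(* If Λ ⊆ Λ', every Λ'-periodic function is Λ-periodic, so F_{Λ'} is a
   Δ_a-stable subspace of F_Λ; in a basis of F_Λ extending one of F_{Λ'},
   Δ_a is block triangular, so the characteristic polynomial on F_{Λ'}
   divides the one on F_Λ.  Taking gcds over the a_j gives
   CharPoly_{a,Λ'} | CharPoly_{a,Λ}, and both divisibilities follow from
   Λ_i ⊆ Λ_1 + Λ_2 and Λ_1 ∩ Λ_2 ⊆ Λ_i, these being again sublattices of
   finite index. *)

Set Implicit Arguments.
Unset Strict Implicit.
Unset Printing Implicit Defensive.
Import GRing.Theory.
Local Open Scope ring_scope.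

Section CharPolyStable.
Variable F : fieldType.

Lemma char_poly_similar n (P M B : 'M[F]_n) :
  P \in unitmx -> P *m M = B *m P -> char_poly M = char_poly B.
Proof.
move=> uP PM.
have -> : M = invmx P *m B *m P by rewrite -mulmxA -PM mulmxA mulVmx // mul1mx.
rewrite /char_poly /char_poly_mx !map_mxM; set f := map_mx polyC.
have XE : f (invmx P) *m 'X%:M *m f P = 'X%:M.
  by rewrite scalar_mxC -mulmxA -map_mxM mulVmx // map_mx1 mulmx1.
have -> : 'X%:M - f (invmx P) *m f B *m f P = f (invmx P) *m ('X%:M - f B) *m f P.
  by rewrite mulmxBr mulmxBl XE.
rewrite !det_mulmx mulrC mulrA -det_mulmx -map_mxM mulmxV //.
by rewrite map_mx1 det1 mul1r.
Qed.

Lemma char_poly_lblock m k (A : 'M[F]_m) (X1 : 'M_(k, m)) (X2 : 'M_k) :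
  char_poly (block_mx A 0 X1 X2) = char_poly A * char_poly X2.
Proof.
rewrite /char_poly /char_poly_mx map_block_mx /= map_mx0.
rewrite scalar_mx_block opp_block_mx add_block_mx oppr0 !addr0 add0r.
exact: det_lblock.
Qed.

Lemma row_free_completion m k (C : 'M[F]_(m, m + k)) :
  row_free C -> exists D : 'M_(k, m + k), col_mx C D \in unitmx.
Proof.
move=> /eqP freeC; have := mulmx_ebase C.
rewrite freeC pid_mx_row; set L := col_ebase C; set U := row_ebase C => CE.
exists (dsubmx U).
have -> : col_mx C (dsubmx U) = block_mx L 0 0 1%:M *m U.
  rewrite -{2}(vsubmxK U) mul_block_col !mul0mx mul1mx addr0 add0r -CE.
  by rewrite -mulmxA -{1}(vsubmxK U) mul_row_col mul1mx mul0mx addr0.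
rewrite unitmxE det_mulmx unitrM -!unitmxE row_ebase_unit andbT.
by rewrite unitmxE det_ublock det1 mulr1 -unitmxE col_ebase_unit.
Qed.

(* The rows of C span a subspace stable under M, on which M acts as M'. *)
Lemma char_poly_stable_dvd m p (C : 'M[F]_(m, p)) (M' : 'M_m) (M : 'M_p) :
  row_free C -> C *m M = M' *m C -> char_poly M' %| char_poly M.
Proof.
move=> freeC CM.
have [k pE] : exists k, p = (m + k)%N.
  by exists (p - m)%N; rewrite subnKC // -(eqP freeC) rank_leq_col.
subst p; have [D unitP] := row_free_completion freeC.
set X := D *m M *m invmx (col_mx C D).
have PM : col_mx C D *m M = block_mx M' 0 (lsubmx X) (rsubmx X) *m col_mx C D.
  rewrite mul_block_col mul0mx addr0 mul_col_mx CM -mul_row_col hsubmxK.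
  by rewrite /X -mulmxA mulVmx // mulmx1.
by rewrite (char_poly_similar unitP PM) char_poly_lblock dvdp_mulIl.
Qed.

End CharPolyStable.

Section FunctionSpaces.
Variables (F : fieldType) (n : nat).
Local Notation fn := (lat n -> F).

Definition lincomb m (c : 'I_m -> F) (b : 'I_m -> fn) : fn :=
  fun x => \sum_i c i * b i x.

Definition lincomb_linear (T : fn -> fn) :=
  forall m (c : 'I_m -> F) b, T (lincomb c b) = lincomb c (fun i => T (b i)).

Definition lincomb_free m (b : 'I_m -> fn) :=
  forall c, lincomb c b = (fun _ => 0) -> forall i, c i = 0.

Lemma eq_lincomb m (c c' : 'I_m -> F) b : c =1 c' -> lincomb c b = lincomb c' b.
Proof.
move=> cc'; apply: funext => x.
by apply: eq_bigr => i _; rewrite cc'.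
Qed.

Lemma lincomb0 m (b : 'I_m -> fn) : lincomb (fun _ => 0) b = fun _ => 0.
Proof.
apply: funext => x.
by rewrite /lincomb big1 // => i _; rewrite mul0r.
Qed.

Lemma lincomb_lincomb m k (v : 'I_m -> F) (C : 'M[F]_(m, k)) b :
  lincomb v (fun i => lincomb (C i) b) = lincomb (fun j => \sum_i v i * C i j) b.
Proof.
apply: funext => x; rewrite /lincomb /=.
under eq_bigr do rewrite mulr_sumr.
rewrite exchange_big; apply: eq_bigr => j _; rewrite mulr_suml.
by apply: eq_bigr => i _; rewrite mulrA.
Qed.

Lemma lincomb_inj m (b : 'I_m -> fn) c c' :
  lincomb_free b -> lincomb c b = lincomb c' b -> c =1 c'.
Proof.
move=> freeb cc' i; apply/eqP; rewrite -subr_eq0; apply/eqP.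
apply: (freeb (fun i => c i - c' i)); apply: funext => x.
have ccx := congr1 (@^~ x) cc'; rewrite /lincomb in ccx *.
under eq_bigr do rewrite mulrBl.
by rewrite sumrB ccx subrr.
Qed.

Lemma is_charpoly_on_exists (V : fn -> Prop) (T : fn -> fn) m (b : 'I_m -> fn) :
  (forall i, V (b i)) ->
  (forall f, V f -> exists c, f = lincomb c b) -> lincomb_free b ->
  (forall f, V f -> V (T f)) ->
  exists q, is_charpoly_on V T q.
Proof.
move=> Vb spanb freeb VT.
have /fin_all_exists[c Tb] i : exists c, T (b i) = lincomb c b by apply/spanb/VT.
pose M := \matrix_(i, j) c i j.
exists (char_poly M), m, b, M; split => // i.
by rewrite Tb; apply: eq_lincomb => j; rewrite mxE.
Qed.

Lemma is_charpoly_on_subspace_dvd (V V' : fn -> Prop) (T : fn -> fn) q q' :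
  (forall f, V' f -> V f) -> lincomb_linear T ->
  is_charpoly_on V' T q' -> is_charpoly_on V T q -> q' %| q.
Proof.
move=> V'V linT [m' [b' [M' [V'b' _ freeb' Tb' ->]]]].
move=> [m [b [M [_ spanb freeb Tb ->]]]].
have /fin_all_exists[c b'E] i : exists c, b' i = lincomb c b.
  exact/spanb/V'V.
pose C := \matrix_(i, j) c i j.
have b'C i : b' i = lincomb (C i) b.
  by rewrite b'E; apply: eq_lincomb => j; rewrite mxE.
have combb' v : lincomb v b' = lincomb (fun j => \sum_i v i * C i j) b.
  by rewrite -lincomb_lincomb; congr lincomb; exact: funext b'C.
have freeC : row_free C.
  apply: inj_row_free => v vC; apply/rowP => i; rewrite mxE.
  apply: (freeb' (v 0)) i; rewrite -/(lincomb (v 0) b') combb' -(lincomb0 b).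
  apply: eq_lincomb => j.
  by have := congr1 (fun w : 'rV_m => w 0 j) vC; rewrite !mxE.
have CM : C *m M = M' *m C.
  have Tb_lincomb : (fun k => T (b k)) = fun k => lincomb (M k) b.
    exact: funext.
  apply/matrixP => i j; apply: (lincomb_inj freeb) j.
  transitivity (T (b' i)).
    rewrite b'C linT Tb_lincomb lincomb_lincomb.
    by apply: eq_lincomb => l; rewrite mxE.
  rewrite Tb' -/(lincomb (M' i) b') combb'.
  by apply: eq_lincomb => l; rewrite mxE.
exact: char_poly_stable_dvd freeC CM.
Qed.

End FunctionSpaces.

Section Polynomials.
Variable F : fieldType.

Lemma monicize_eqp (p : {poly F}) : monicize p %= p.
Proof.
have [->|p_neq0] := eqVneq p 0; first by rewrite /monicize scaler0 eqpxx.
by apply: eqp_scale; rewrite invr_eq0 lead_coef_eq0.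
Qed.

Lemma dvdp_lcmp (p q r : {poly F}) : p %| r -> q %| r -> lcmp p q %| r.
Proof.
move=> pr qr; rewrite /lcmp (eqp_dvdl _ (monicize_eqp _)).
have [g0 | g_neq0] := eqVneq (gcdp p q) 0.
  move/eqP: g0; rewrite gcdp_eq0 => /andP[/eqP p0 _].
  by rewrite p0 mul0r div0p -p0.
set g := gcdp p q in g_neq0 *.
have pE : p = p %/ g * g by rewrite divpK // dvdp_gcdl.
have qE : q = q %/ g * g by rewrite divpK // dvdp_gcdr.
have rE : r = r %/ q * q by rewrite divpK.
have -> : p * q %/ g = p %/ g * q by rewrite {1}pE mulrAC mulpK.
have coprime_pq : coprimep (p %/ g) (q %/ g).
  by apply: coprimep_div_gcd; rewrite -negb_and -gcdp_eq0.
rewrite rE dvdp_mul // -(Gauss_dvdpl _ coprime_pq) -(dvdp_mul2r _ _ g_neq0).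
by rewrite -mulrA -qE -pE -rE.
Qed.

Lemma dvdp_big_gcdp t (P Q : 'I_t -> {poly F}) : (forall j, P j %| Q j) ->
  \big[@gcdp F/0]_(j < t) P j %| \big[@gcdp F/0]_(j < t) Q j.
Proof.
move=> PQ; apply: (big_ind2 (fun x y => x %| y)) => // x1 x2 y1 y2 xy1 xy2.
by rewrite dvdp_gcd (dvdp_trans (dvdp_gcdl _ _)) ?(dvdp_trans (dvdp_gcdr _ _)).
Qed.

End Polynomials.

Section Sublattices.
Variable n : nat.
Implicit Types S : lat n -> Prop.

Lemma sublattice0 S : sublattice S -> S 0.
Proof. by case. Qed.

Lemma sublatticeB S x y : sublattice S -> S x -> S y -> S (x - y).
Proof. by case=> _; apply. Qed.

Lemma sublatticeN S x : sublattice S -> S x -> S (- x).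
Proof.
by move=> subS Sx; rewrite -sub0r; apply: sublatticeB => //; apply: sublattice0.
Qed.

Lemma sublatticeD S x y : sublattice S -> S x -> S y -> S (x + y).
Proof.
move=> subS Sx Sy; rewrite -[y]opprK.
by apply: sublatticeB => //; apply: sublatticeN.
Qed.

Lemma sublattice_add S1 S2 :
  sublattice S1 -> sublattice S2 -> sublattice (lat_add S1 S2).
Proof.
move=> sub1 sub2; split.
  by exists 0, 0; split; rewrite ?addr0 //; apply: sublattice0.
move=> _ _ [x1 [y1 [S1x1 S2y1 ->]]] [x2 [y2 [S1x2 S2y2 ->]]].
exists (x1 - x2), (y1 - y2); split; try exact: sublatticeB.
by rewrite opprD addrACA.
Qed.

Lemma sublattice_cap S1 S2 :
  sublattice S1 -> sublattice S2 -> sublattice (lat_cap S1 S2).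
Proof.
move=> sub1 sub2; split; first by split; apply: sublattice0.
by move=> x y [S1x S2x] [S1y S2y]; split; apply: sublatticeB.
Qed.

Lemma lat_addl S1 S2 v : sublattice S2 -> S1 v -> lat_add S1 S2 v.
Proof.
by move=> sub2 S1v; exists v, 0; split; rewrite ?addr0 //; apply: sublattice0.
Qed.

Lemma lat_addr S1 S2 v : sublattice S1 -> S2 v -> lat_add S1 S2 v.
Proof.
by move=> sub1 S2v; exists 0, v; split; rewrite ?add0r //; apply: sublattice0.
Qed.

Lemma finite_index_supset S S' :
  (forall v, S v -> S' v) -> finite_index S -> finite_index S'.
Proof.
move=> SS' [s covers]; exists s => v.
by have [w sw Svw] := covers v; exists w; last exact: SS'.
Qed.

Lemma finite_index_cap S1 S2 : sublattice S1 -> sublattice S2 ->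
  finite_index S1 -> finite_index S2 -> finite_index (lat_cap S1 S2).
Proof.
move=> sub1 sub2 [s1 covers1] [s2 covers2].
pose common w1 w2 := epsilon (inhabits 0) (fun u => S1 (u - w1) /\ S2 (u - w2)).
exists [seq common w1 w2 | w1 <- s1, w2 <- s2] => v.
have [w1 s1w1 S1vw1] := covers1 v; have [w2 s2w2 S2vw2] := covers2 v.
exists (common w1 w2); first exact: allpairs_f.
have [S1cw1 S2cw2] : S1 (common w1 w2 - w1) /\ S2 (common w1 w2 - w2).
  by apply: (epsilon_spec _ (fun u => S1 (u - w1) /\ S2 (u - w2))); exists v.
have diffE w : v - common w1 w2 = (v - w) - (common w1 w2 - w).
  by rewrite opprB addrA subrK.
by split; [rewrite (diffE w1) | rewrite (diffE w2)]; apply: sublatticeB.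
Qed.

End Sublattices.

Lemma sumr_mul_delta (R : nzSemiRingType) m (g : 'I_m -> R) (j : 'I_m) :
  \sum_i g i * (i == j)%:R = g j.
Proof.
rewrite (bigD1 j) //= eqxx mulr1 big1 ?addr0 // => i /negPf->.
by rewrite mulr0.
Qed.

Section PeriodicBasis.
Variables (F : fieldType) (n : nat) (S : lat n -> Prop) (s : seq (lat n)).
Hypotheses (subS : sublattice S)
  (covers : forall v, exists2 w, w \in s & S (v - w)).

Definition coset_rep v := nth 0 s (find (fun w => `[< S (v - w) >]) s).

Lemma coset_repP v : coset_rep v \in s /\ S (v - coset_rep v).
Proof.
have [w sw Svw] := covers v.
have has_rep : has (fun w => `[< S (v - w) >]) s.
  by apply/hasP; exists w => //; apply/asboolP.
split; first by rewrite mem_nth // -has_find.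
exact/asboolP/(nth_find 0 has_rep).
Qed.

Lemma coset_rep_eq v v' : S (v - v') -> coset_rep v = coset_rep v'.
Proof.
move=> Svv'; rewrite /coset_rep; congr nth; apply: eq_find => w.
apply/asboolP/asboolP => [Svw | Sv'w].
  have -> : v' - w = (v - w) - (v - v') by rewrite opprB [RHS]addrC addrA subrK.
  exact: sublatticeB.
have -> : v - w = (v - v') + (v' - w) by rewrite addrA subrK.
exact: sublatticeD.
Qed.

Lemma coset_rep_id v : coset_rep (coset_rep v) = coset_rep v.
Proof.
apply: coset_rep_eq; rewrite -opprB; apply: sublatticeN => //.
exact: (coset_repP v).2.
Qed.

Definition coset_reps := undup (map coset_rep s).
Local Notation N := (size coset_reps).

Lemma coset_rep_in v : coset_rep v \in coset_reps.
Proof. by rewrite mem_undup -coset_rep_id map_f ?(coset_repP v).1. Qed.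

Lemma coset_reps_fixed u : u \in coset_reps -> coset_rep u = u.
Proof. by rewrite mem_undup => /mapP[w _ ->]; exact: coset_rep_id. Qed.

Lemma eq_coset_reps (i j : 'I_N) : (coset_reps`_i == coset_reps`_j) = (i == j).
Proof. by rewrite nth_uniq ?undup_uniq. Qed.

Definition coset_index v : 'I_N :=
  Ordinal (etrans (index_mem _ _) (coset_rep_in v)).

Definition coset_indicator (i : 'I_N) v : F := (coset_reps`_i == coset_rep v)%:R.

Lemma coset_indicatorE i v : coset_indicator i v = (i == coset_index v)%:R.
Proof.
rewrite /coset_indicator -{1}(nth_index 0 (coset_rep_in v)).
by rewrite -[index _ _]/(val (coset_index v)) eq_coset_reps.
Qed.

Lemma periodic_finite_basis : exists m (b : 'I_m -> lat n -> F),
  [/\ forall i, periodic S (b i),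
      forall f, periodic S f -> exists c, f = lincomb c b
    & lincomb_free b].
Proof.
exists N, coset_indicator; split.
- move=> i v w Sw; rewrite /coset_indicator (@coset_rep_eq (v + w) v) //.
  by rewrite addrAC subrr add0r.
- move=> f per_f; exists (fun i => f coset_reps`_i).
  apply: funext => v; rewrite /lincomb.
  under eq_bigr do rewrite coset_indicatorE.
  rewrite sumr_mul_delta /= nth_index ?coset_rep_in //.
  by have := per_f (coset_rep v) _ (coset_repP v).2; rewrite subrKC => ->.
- move=> c c0 j; have := congr1 (@^~ coset_reps`_j) c0; rewrite /lincomb /=.
  under eq_bigr do
    rewrite /coset_indicator coset_reps_fixed ?mem_nth // eq_coset_reps.
  by rewrite sumr_mul_delta.
Qed.

End PeriodicBasis.

Lemma periodic_sub (F : fieldType) n (S S' : lat n -> Prop) (f : lat n -> F) :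
  (forall v, S v -> S' v) -> periodic S' f -> periodic S f.
Proof. by move=> SS' per_f v w /SS'; apply: per_f. Qed.

Lemma charpoly_on_periodic (F : fieldType) n (S : lat n -> Prop)
    (T : (lat n -> F) -> lat n -> F) :
  sublattice S -> finite_index S ->
  (forall f, periodic S f -> periodic S (T f)) ->
  is_charpoly_on (periodic S) T (charpoly_on (periodic S) T).
Proof.
move=> subS [s covers] T_periodic; apply: epsilon_spec.
have [m [b [per_b spanb freeb]]] := periodic_finite_basis F subS covers.
exact: is_charpoly_on_exists per_b spanb freeb T_periodic.
Qed.

Section Convolution.
Variables (F : fieldType) (n : nat).

Lemma conv_lincomb_linear (a : {fsfun lat n -> F with 0}) :
  lincomb_linear (fun f => conv f a).
Proof.
move=> m c b; apply: funext => g; rewrite /conv /lincomb.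
under eq_bigr do rewrite mulr_suml.
rewrite exchange_big; apply: eq_bigr => i _; rewrite mulr_sumr.
by apply: eq_bigr => k _; rewrite mulrA.
Qed.

Lemma conv_periodic (S : lat n -> Prop) (a : {fsfun lat n -> F with 0}) f :
  periodic S f -> periodic S (conv f a).
Proof.
move=> per_f v w Sw; rewrite /conv /=.
by apply: eq_bigr => k _; rewrite addrAC (per_f (v - k) w Sw).
Qed.

Lemma CharPoly_dvd t (a : 'I_t -> {fsfun lat n -> F with 0})
    (S S' : lat n -> Prop) :
  sublattice S -> finite_index S -> sublattice S' -> finite_index S' ->
  (forall v, S v -> S' v) -> CharPoly a S' %| CharPoly a S.
Proof.
move=> subS finS subS' finS' SS'.
rewrite /CharPoly (eqp_dvdl _ (monicize_eqp _)) (eqp_dvdr _ (monicize_eqp _)).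
apply: dvdp_big_gcdp => j.
apply: is_charpoly_on_subspace_dvd (conv_lincomb_linear (a j))
  (charpoly_on_periodic subS' finS' (@conv_periodic _ _))
  (charpoly_on_periodic subS finS (@conv_periodic _ _)).
by move=> f; apply: periodic_sub.
Qed.

End Convolution.

Unset Implicit Arguments.

Theorem theorem2p4 (p r : nat) (K : finFieldType) (Kbar : closedFieldType)
    (iota : {rmorphism K -> Kbar})
    (hp : prime p) (hr : (0 < r)%N) (hK : #|K| = (p ^ r)%N)
    (halg : forall x : Kbar,
        exists2 q : {poly K}, q != 0 & root (map_poly iota q) x)
    (n t : nat) (a : 'I_t -> {fsfun lat n -> Kbar with 0})
    (L1 L2 : lat n -> Prop) :
  sublattice L1 -> finite_index L1 -> sublattice L2 -> finite_index L2 ->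
  [/\ CharPoly a (lat_add L1 L2) %| gcdp (CharPoly a L1) (CharPoly a L2),
      lcmp (CharPoly a L1) (CharPoly a L2) %| CharPoly a (lat_cap L1 L2)
    & (forall v, L1 v -> L2 v) -> CharPoly a L2 %| CharPoly a L1].
Proof.
move=> sub1 fin1 sub2 fin2.
have subA := sublattice_add sub1 sub2.
have finA := finite_index_supset (fun v => @lat_addl _ L1 L2 v sub2) fin1.
have subC := sublattice_cap sub1 sub2.
have finC := finite_index_cap sub1 sub2 fin1 fin2.
split.
- rewrite dvdp_gcd; apply/andP; split; apply: CharPoly_dvd => // v.
    exact: lat_addl.
  exact: lat_addr.
- by apply: dvdp_lcmp; apply: CharPoly_dvd => // v [].
- exact: CharPoly_dvd.
Qed.
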